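(* Let $(\mu,s)$ be a configuration under no observability for the objective game $G$ such that for every $i\in N$, every type $\theta_i\in\operatorname{supp}\mu_i$ is of the form $\theta_i=\alpha\pi_i+\beta$ for some real $\alpha>0$, $\beta$ (possibly depending on $\theta_i$). Suppose that for every nonempty $J\subseteq N$, every mutant sub-profile $\tilde\theta_J\in\prod_{j\in J}(\Theta\setminus\operatorname{supp}\mu_j)$ and every $\eta>0$, the nearby set $B_0^\eta(\tilde\mu^\varepsilon;s)$ is nonempty for all $\varepsilon\in(0,1)^{|J|}$ with $\|\varepsilon\|$ sufficiently small. Then $(\mu,s)$ is stable.
   Context: Objective game: $G=(N,A,\pi)$ is a finite $n$-player normal-form game, $N=\{1,\dots,n\}$, finite action sets $A_i$, $A=\prod_iA_i$, fitness functions $\pi_i:A\to\mathbb{R}$ extended multilinearly to $\prod_i\Delta(A_i)$. Preference types: $\Theta=\mathbb{R}^A$ (extended multilinearly). $\mathcal{M}(\Theta^n)$: product distributions $\mu=\mu_1\times\dots\times\mu_n$ on $\Theta^n$ with finitely supported marginals; $\operatorname{supp}\mu=\prod_i\operatorname{supp}\mu_i$, $\mu_{-i}(\theta_{-i})=\prod_{j\neq i}\mu_j(\theta_j)$. Mutants: for nonempty $J\subseteq N$, a mutant sub-profile is $\tilde\theta_J\in\prod_{j\in J}(\Theta\setminus\operatorname{supp}\mu_j)$ with shares $\varepsilon\in(0,1)^{|J|}$, $\|\varepsilon\|=\max_j\varepsilon_j$; post-entry $\tilde\mu^\varepsilon_i=(1-\varepsilon_i)\mu_i+\varepsilon_i\delta_{\tilde\theta_i}$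 for $i\in J$, $\tilde\mu^\varepsilon_i=\mu_i$ otherwise. No observability: a strategy of player $i$ is $s_i:\operatorname{supp}\mu_i\to\Delta(A_i)$, $s(\theta)=(s_1(\theta_1),\dots,s_n(\theta_n))$; $s$ is a Bayesian–Nash equilibrium if for each $i$ and $\theta_i\in\operatorname{supp}\mu_i$, $s_i(\theta_i)\in\arg\max_{\sigma_i\in\Delta(A_i)}\sum_{\theta'_{-i}\in\operatorname{supp}\mu_{-i}}\mu_{-i}(\theta'_{-i})\theta_i(\sigma_i,s_{-i}(\theta'_{-i}))$; $B_0(\mu)$ is the set of these; $(\mu,s)$ with $s\in B_0(\mu)$ is a configuration, with aggregate outcome $x(\mu,s)=\big(\sum_{\theta_i}\mu_i(\theta_i)s_i(\theta_i)\big)_{i}$. Average fitness: $\Pi_{\theta_i}(\mu;s)=\pi_i(s_i(\theta_i),x(\mu,s)_{-i})$. Balanced: all types in each $\operatorname{supp}\mu_i$ have equal average fitness. Nearby set: for $\eta\ge0$, $B_0^\eta(\tilde\mu^\varepsilon;s)=\{\tilde s\in B_0(\tilde\mu^\varepsilon):\max_{i}\|\tilde s_i(\theta_i)-s_i(\theta_i)\|\le\eta\ \forall\theta\in\operatorname{supp}\mu\}$ (Euclidean norm). $(\mu,s)$ is stable if it is balanced and for every nonempty $J\subseteq N$, every $\tilde\theta_J$ and every $\eta>0$ there exist $\bar\eta\in[0,\eta)$ and $\bar\epsilon\in(0,1)$ such that for every $\varepsilon$ with $\|\varepsilon\|\in(0,\bar\epsilon)$, $B_0^{\bar\eta}(\tilde\mu^\varepsilon;s)\neq\emptyset$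 and every $\tilde s\in B_0^{\bar\eta}(\tilde\mu^\varepsilon;s)$ satisfies either (i) some $j\in J$ has $\Pi_{\theta_j}(\tilde\mu^\varepsilon;\tilde s)>\Pi_{\tilde\theta_j}(\tilde\mu^\varepsilon;\tilde s)$ for all $\theta_j\in\operatorname{supp}\mu_j$, or (ii) for every $i$ all types in $\operatorname{supp}\tilde\mu^\varepsilon_i$ have equal average fitness under $(\tilde\mu^\varepsilon,\tilde s)$. *)

From HB Require Import structures.
From mathcomp Require Import all_boot all_order all_algebra.
Set Implicit Arguments. Unset Strict Implicit. Unset Printing Implicit Defensive.
Import Order.TTheory GRing.Theory Num.Theory.
Local Open Scope ring_scope.

Section Game.
Variables (R : rcfType) (n : nat) (Act : finType) (A : 'I_n -> {set Act}).

Definition prof := {a : {ffun 'I_n -> Act} | [forall i, a i \in A i]}.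

Definition Theta := {ffun prof -> R}.

(* Mixed strategies of player i: elements of Delta(A_i), represented as
   functions Act -> R vanishing outside A i. *)
Definition mixed (i : 'I_n) (sg : Act -> R) : Prop :=
  (forall x, 0 <= sg x) /\ (forall x, x \notin A i -> sg x = 0) /\
  \sum_(x in A i) sg x = 1.

Definition ml (u : prof -> R) (sg : 'I_n -> Act -> R) : R :=
  \sum_(a : prof) (\prod_(i < n) sg i (val a i)) * u a.

Definition mdist (i : 'I_n) (sg tau : Act -> R) : R :=
  Num.sqrt (\sum_(x in A i) (sg x - tau x) ^+ 2).

Record fsd := Fsd { fsupp : seq Theta; fw : Theta -> R }.

Definition fsd_valid (d : fsd) : Prop :=
  uniq (fsupp d) /\ (forall t, (t \in fsupp d) <-> 0 < fw d t) /\
  (forall t, 0 <= fw d t) /\ \sum_(t <- fsupp d) fw d t = 1.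

(* a product distribution mu = mu_1 x ... x mu_n is given by its marginals *)
Definition dist := 'I_n -> fsd.

(* strategies s_i : supp mu_i -> Delta(A_i) (values off the support are
   irrelevant in every definition below) *)
Definition strat := 'I_n -> Theta -> Act -> R.

Definition upd (f : 'I_n -> Theta) (j : 'I_n) (t : Theta) : 'I_n -> Theta :=
  fun k => if k == j then t else f k.

(* the list of all type profiles in prod_{j in ps} supp mu_j
   (coordinates outside ps are given by the default df) *)
Fixpoint tprofs (mu : dist) (df : 'I_n -> Theta) (ps : seq 'I_n)
  : seq ('I_n -> Theta) :=
  match ps with
  | [::] => [:: df]
  | j :: ps' => [seq upd f j t | t <- fsupp (mu j), f <- tprofs mu df ps']
  end.

Definition others (i : 'I_n) : seq 'I_n := [seq j <- enum 'I_n | j != i].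

Definition EU (mu : dist) (s : strat) (i : 'I_n) (th : Theta)
  (sg : Act -> R) : R :=
  \sum_(tp <- tprofs mu (fun _ => th) (others i))
    (\prod_(j <- others i) fw (mu j) (tp j)) *
    ml th (fun k => if k == i then sg else s k (tp k)).

Definition bne (mu : dist) (s : strat) : Prop :=
  forall i th, th \in fsupp (mu i) ->
    mixed i (s i th) /\
    forall sg, mixed i sg -> EU mu s i th sg <= EU mu s i th (s i th).

Definition configuration (mu : dist) (s : strat) : Prop :=
  (forall i, fsd_valid (mu i)) /\ bne mu s.

Definition xagg (mu : dist) (s : strat) (i : 'I_n) : Act -> R :=
  fun x => \sum_(t <- fsupp (mu i)) fw (mu i) t * s i t x.

Definition avgfit (pi : 'I_n -> prof -> R) (mu : dist) (s : strat)
  (i : 'I_n) (th : Theta) : R :=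
  ml (pi i) (fun k => if k == i then s i th else xagg mu s k).

Definition balanced pi (mu : dist) (s : strat) : Prop :=
  forall i t t', t \in fsupp (mu i) -> t' \in fsupp (mu i) ->
    avgfit pi mu s i t = avgfit pi mu s i t'.

Definition entry (mu : dist) (J : {set 'I_n}) (tt : 'I_n -> Theta)
  (eps : 'I_n -> R) : dist :=
  fun i => if i \in J then
    Fsd (fsupp (mu i) ++ [:: tt i])
        (fun t => (1 - eps i) * fw (mu i) t + eps i * (t == tt i)%:R)
  else mu i.

Definition nearby (mu : dist) (mu' : dist) (s : strat) (eta : R)
  (s' : strat) : Prop :=
  bne mu' s' /\
  forall i t, t \in fsupp (mu i) -> mdist i (s' i t) (s i t) <= eta.

Definition mutant (mu : dist) (J : {set 'I_n}) (tt : 'I_n -> Theta) : Prop :=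
  J != set0 /\ forall j, j \in J -> tt j \notin fsupp (mu j).

(* eps in (0,1)^|J| with ||eps|| = max_{j in J} eps_j < ebar *)
Definition small_shares (J : {set 'I_n}) (eps : 'I_n -> R) (ebar : R) : Prop :=
  forall j, j \in J -> 0 < eps j < 1 /\ eps j < ebar.

Definition stable (pi : 'I_n -> prof -> R) (mu : dist) (s : strat) : Prop :=
  balanced pi mu s /\
  forall J tt, mutant mu J tt -> forall eta, 0 < eta ->
  exists etab ebar, (0 <= etab < eta) /\ (0 < ebar < 1) /\
    forall eps, small_shares J eps ebar ->
      let mu' := entry mu J tt eps in
      (exists s', nearby mu mu' s etab s') /\
      forall s', nearby mu mu' s etab s' ->
        (exists2 j, j \in J & forall t, t \in fsupp (mu j) ->
            avgfit pi mu' s' j (tt j) < avgfit pi mu' s' j t)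
        \/ balanced pi mu' s'.

End Game.

(** Under no observability a type only faces the other players' strategies
    through their aggregate outcomes, because the type profile is drawn from a
    product distribution: its interim expected payoff from a mixed action [sg]
    is its own utility evaluated at [(sg, x_{-i})].  A type [alpha pi_i + beta]
    with [alpha > 0] therefore best-responds to [x_{-i}] in terms of fitness, so
    in any Bayesian-Nash equilibrium its average fitness is maximal among the
    types of its population.  Applied to the resident types, this gives balance
    of [(mu, s)]; applied to the post-entry equilibria it shows that residents
    stay balanced among themselves and every mutant does at most as well as
    them, so either some mutant does strictly worse or all fitnesses agree. *)
From HB Require Import structures.
From mathcomp Require Import all_boot all_order all_algebra.
From mathcomp Require Import ring.
Set Implicit Arguments. Unset Strict Implicit. Unset Printing Implicit Defensive.
Import Order.TTheory GRing.Theory Num.Theory.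
Local Open Scope ring_scope.

Section NoObservability.
Variables (R : rcfType) (n : nat) (Act : finType) (A : 'I_n -> {set Act}).

Lemma eq_ml (u : prof A -> R) (sg sg' : 'I_n -> Act -> R) :
  (forall k x, sg k x = sg' k x) -> ml u sg = ml u sg'.
Proof.
move=> E; apply: eq_bigr => a _; congr (_ * _); apply: eq_bigr => i _; exact: E.
Qed.

Lemma eq_ml_fun (u u' : prof A -> R) (sg : 'I_n -> Act -> R) :
  (forall a, u a = u' a) -> ml u sg = ml u' sg.
Proof. by move=> E; apply: eq_bigr => a _; rewrite E. Qed.

Lemma ml1 (sg : 'I_n -> Act -> R) :
  ml (A:=A) (fun _ => 1) sg = \prod_(i < n) \sum_(x in A i) sg i x.
Proof.
rewrite bigA_distr_big_dep /ml.
rewrite (big_sub (fun f : {ffun 'I_n -> Act} => [forall i, f i \in A i])) /=.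
by apply: eq_bigr => a _; rewrite mulr1.
Qed.

Lemma ml_affine (p : prof A -> R) (al be : R) (sg : 'I_n -> Act -> R) :
  ml (fun a => al * p a + be) sg = al * ml p sg + be * ml (A:=A) (fun _ => 1) sg.
Proof.
rewrite /ml !mulr_sumr -big_split; apply: eq_bigr => a _ /=; ring.
Qed.

Lemma ml_sum_coord (u : prof A -> R) j (H : 'I_n -> Act -> R) (T : Type)
    (r : seq T) (c : T -> R) (f : T -> Act -> R) :
  \sum_(t <- r) c t * ml u (fun k => if k == j then f t else H k) =
  ml u (fun k => if k == j then (fun x => \sum_(t <- r) c t * f t x) else H k).
Proof.
rewrite /ml; under eq_bigr do rewrite mulr_sumr.
rewrite exchange_big /=; apply: eq_bigr => a _.
have split_j g : \prod_(i < n) (if i == j then g else H i) (val a i)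
    = g (val a j) * \prod_(i < n | i != j) H i (val a i).
  rewrite (bigD1 j) //= eqxx; congr (_ * _).
  by apply: eq_bigr => i /negbTE ->.
rewrite split_j !mulr_suml; apply: eq_bigr => t _; rewrite split_j; ring.
Qed.

Lemma ml1_mixed i (sg sg' : Act -> R) (X : 'I_n -> Act -> R) :
  mixed A i sg -> mixed A i sg' ->
  ml (A:=A) (fun _ => 1) (fun k => if k == i then sg else X k) =
  ml (A:=A) (fun _ => 1) (fun k => if k == i then sg' else X k).
Proof.
move=> [_ [_ sum_sg]] [_ [_ sum_sg']].
rewrite !ml1 (bigD1 i) //= [RHS](bigD1 i) //= !eqxx sum_sg sum_sg'.
by congr (_ * _); apply: eq_bigr => k /negbTE ->.
Qed.

(* Summing over the type profiles of the players in [ps] one coordinate at a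
   time, [ml_sum_coord] replaces each strategy by the aggregate outcome. *)
Lemma tprofs_ml (mu : dist R A) (s : strat R A) (u : prof A -> R)
    (df : 'I_n -> Theta R A) (ps : seq 'I_n) :
  uniq ps -> forall g : 'I_n -> Act -> R,
  \sum_(tp <- tprofs mu df ps) (\prod_(j <- ps) fw (mu j) (tp j)) *
     ml u (fun k => if k \in ps then s k (tp k) else g k)
  = ml u (fun k => if k \in ps then xagg mu s k else g k).
Proof.
elim: ps => [|j ps IH] /=.
  by move=> _ g; rewrite big_cons !big_nil mul1r addr0.
move=> /andP[jNps ups] g; rewrite big_allpairs_dep /=.
pose H k := if k \in ps then xagg mu s k else g k.
transitivity (\sum_(t <- fsupp (mu j)) fw (mu j) t *
    ml u (fun k => if k == j then s j t else H k)); last first.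
  rewrite ml_sum_coord; apply: eq_ml => k x.
  by rewrite in_cons /H; case: eqP => //= ->.
apply: eq_bigr => t _.
pose gt k := if k == j then s j t else g k.
have -> : ml u (fun k => if k == j then s j t else H k) =
          ml u (fun k => if k \in ps then xagg mu s k else gt k).
  by apply: eq_ml => k x; rewrite /H /gt; case: eqP => // ->; rewrite (negbTE jNps).
rewrite -(IH ups gt) mulr_sumr; apply: eq_bigr => f _.
rewrite big_cons /upd eqxx mulrA; congr (_ * _ * _).
  rewrite big_seq_cond [RHS]big_seq_cond; apply: eq_bigr => k /andP[kps _].
  by case: eqP kps => [->|//]; rewrite (negbTE jNps).
apply: eq_ml => k x; rewrite in_cons /gt.
by case: eqP => [->|_] //=; rewrite (negbTE jNps).
Qed.

Lemma EU_ml (mu : dist R A) (s : strat R A) i (th : Theta R A) (sg : Act -> R) :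
  EU mu s i th sg = ml th (fun k => if k == i then sg else xagg mu s k).
Proof.
have mem_others k : (k \in others i) = (k != i).
  by rewrite mem_filter mem_enum andbT.
rewrite /EU.
under eq_bigr => tp _.
  rewrite (@eq_ml th _
     (fun k => if k \in others i then s k (tp k) else (fun _ => sg) k)); last first.
    by move=> k x; rewrite mem_others; case: eqP.
  over.
rewrite tprofs_ml; last by rewrite filter_uniq // enum_uniq.
by apply: eq_ml => k x; rewrite mem_others; case: eqP.
Qed.

Definition fitness_equivalent (pi : 'I_n -> prof A -> R) i (t : Theta R A) :=
  exists al be : R, 0 < al /\ forall a, t a = al * pi i a + be.

Section Equilibrium.
Variables (pi : 'I_n -> prof A -> R) (nu : dist R A) (s : strat R A).
Hypothesis nu_bne : bne nu s.

Lemma avgfit_le_fitness_equivalent i t t' :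
  t \in fsupp (nu i) -> t' \in fsupp (nu i) -> fitness_equivalent pi i t ->
  avgfit pi nu s i t' <= avgfit pi nu s i t.
Proof.
move=> ti t'i [al [be [al_gt0 t_affine]]].
have [mixed_t best_t] := nu_bne ti; have [mixed_t' _] := nu_bne t'i.
have := best_t _ mixed_t'; rewrite !EU_ml !(eq_ml_fun _ t_affine) !ml_affine.
by rewrite (ml1_mixed _ mixed_t' mixed_t) lerD2r ler_pM2l.
Qed.

Lemma avgfit_eq_fitness_equivalent i t t' :
  t \in fsupp (nu i) -> t' \in fsupp (nu i) ->
  fitness_equivalent pi i t -> fitness_equivalent pi i t' ->
  avgfit pi nu s i t = avgfit pi nu s i t'.
Proof.
move=> ti t'i eqv_t eqv_t'; apply/eqP; rewrite eq_le.
by rewrite !avgfit_le_fitness_equivalent.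
Qed.

End Equilibrium.

Lemma mem_entry (mu : dist R A) J tt eps i t :
  (t \in fsupp (entry mu J tt eps i)) =
  (t \in fsupp (mu i)) || ((i \in J) && (t == tt i)).
Proof.
by rewrite /entry; case: (i \in J) => /=; rewrite ?mem_cat ?mem_seq1 ?orbF.
Qed.

Section Entry.
Variables (pi : 'I_n -> prof A -> R) (mu : dist R A) (J : {set 'I_n}).
Variables (tt : 'I_n -> Theta R A) (eps : 'I_n -> R) (s' : strat R A).
Local Notation mu' := (entry mu J tt eps).
Hypothesis entry_bne : bne mu' s'.
Hypothesis res_eqv : forall i t, t \in fsupp (mu i) -> fitness_equivalent pi i t.

Lemma mem_entry_resident i t : t \in fsupp (mu i) -> t \in fsupp (mu' i).
Proof. by move=> ti; rewrite mem_entry ti. Qed.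

Lemma entry_avgfit_resident_eq i t t' : t \in fsupp (mu i) -> t' \in fsupp (mu i) ->
  avgfit pi mu' s' i t = avgfit pi mu' s' i t'.
Proof.
move=> ti t'i; apply: (avgfit_eq_fitness_equivalent entry_bne);
  by [apply: mem_entry_resident | apply: res_eqv].
Qed.

Lemma entry_avgfit_le_resident i t t' : t \in fsupp (mu' i) -> t' \in fsupp (mu i) ->
  avgfit pi mu' s' i t <= avgfit pi mu' s' i t'.
Proof.
move=> ti t'i; apply: (avgfit_le_fitness_equivalent entry_bne) => //;
  by [apply: mem_entry_resident | apply: res_eqv].
Qed.

Lemma entry_outcome :
  (exists2 j, j \in J & forall t, t \in fsupp (mu j) ->
      avgfit pi mu' s' j (tt j) < avgfit pi mu' s' j t)
  \/ balanced pi mu' s'.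
Proof.
have [|no_worse] := boolP [exists j in J,
    has (fun t => avgfit pi mu' s' j (tt j) < avgfit pi mu' s' j t) (fsupp (mu j))].
  case/exists_inP=> j jJ /hasP[t0 t0j worse]; left; exists j => // t tj.
  by rewrite (entry_avgfit_resident_eq tj t0j).
right.
have eq_resident i t t' : t \in fsupp (mu' i) -> t' \in fsupp (mu i) ->
    avgfit pi mu' s' i t = avgfit pi mu' s' i t'.
  move=> ti t'i; apply/eqP; rewrite eq_le entry_avgfit_le_resident //=.
  move: ti; rewrite mem_entry => /orP[t_res|/andP[iJ /eqP ->]].
    by rewrite (entry_avgfit_resident_eq t'i t_res).
  rewrite leNgt; apply/negP => worse; move/exists_inP: no_worse; apply.
  by exists i => //; apply/hasP; exists t'.
move=> i t t' ti t'i; move: (t'i); rewrite mem_entry => /orP[t'_res|].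
  exact: eq_resident.
case/andP=> iJ /eqP ->; move: (ti); rewrite mem_entry => /orP[t_res|/andP[_ /eqP ->]] //.
by symmetry; apply: eq_resident t_res; rewrite mem_entry iJ eqxx orbT.
Qed.

End Entry.

End NoObservability.

Lemma small_shares_min (R : rcfType) n J (eps : 'I_n -> R) (e e' : R) :
  small_shares J eps (Num.min e e') -> small_shares J eps e.
Proof.
move=> small j jJ; have [eps01 eps_lt] := small j jJ.
by split=> //; apply: lt_le_trans eps_lt _; rewrite ge_min lexx.
Qed.

Theorem mainTheorem11 (R : rcfType) (n : nat) (Act : finType)
  (A : 'I_n -> {set Act}) (pi : 'I_n -> prof A -> R)
  (mu : dist R A) (s : strat R A) :
  configuration mu s ->
  (forall i (t : Theta R A), t \in fsupp (mu i) ->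
     exists alpha beta : R, 0 < alpha /\
       forall a : prof A, t a = alpha * pi i a + beta) ->
  (forall (J : {set 'I_n}) (tt : 'I_n -> Theta R A), mutant mu J tt ->
     forall eta : R, 0 < eta ->
     exists2 ebar : R, 0 < ebar &
       forall eps : 'I_n -> R, small_shares J eps ebar ->
         exists s' : strat R A, nearby mu (entry mu J tt eps) s eta s') ->
  stable pi mu s.
Proof.
move=> [_ mu_bne] res_eqv near; split.
  by move=> i t t' ti t'i; apply: (avgfit_eq_fitness_equivalent mu_bne ti t'i);
    apply: res_eqv.
move=> J tt mutJ eta eta_gt0.
have eta2_gt0 : 0 < eta / 2 by rewrite divr_gt0.
have [ebar ebar_gt0 near_ebar] := near J tt mutJ _ eta2_gt0.
exists (eta / 2), (Num.min ebar (1 / 2)); split.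
  by rewrite ltW //= ltr_pdivrMr // ltr_pMr // ltr1n.
split.
  by rewrite lt_min ebar_gt0 divr_gt0 //= gt_min ltr_pdivrMr // mul1r ltr1n orbT.
move=> eps small /=; split; first exact/near_ebar/small_shares_min/small.
by move=> s' [bne' _]; apply: entry_outcome.
Qed.
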